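(* If $T$ is a subcubic tree of order $n$, then $\frac{2n}{3}\le \psi(T)\le \frac{4n+2}{5}$. Moreover, both bounds are tight, i.e., each bound is attained with equality by some subcubic trees.
   Context: All graphs are finite, simple and undirected. A subcubic tree is a tree of maximum degree at most $3$. A dissociation set in a graph $G$ is a vertex subset $F$ such that the induced subgraph $G[F]$ has maximum degree at most $1$; the dissociation number $\psi(G)$ is the maximum cardinality of a dissociation set of $G$. *)

From mathcomp Require Import all_boot.
Set Implicit Arguments. Unset Strict Implicit. Unset Printing Implicit Defensive.

Definition simple_graph (T : finType) (e : rel T) : Prop :=
  symmetric e /\ irreflexive e.

Definition nbhd (T : finType) (e : rel T) (x : T) : {set T} := [set y | e x y].
Definition deg (T : finType) (e : rel T) (x : T) : nat := #|nbhd e x|.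

(* number of edges: each unordered edge counted twice among ordered pairs *)
Definition nedges (T : finType) (e : rel T) : nat :=
  #|[set p : T * T | e p.1 p.2]| %/ 2.

Definition is_tree (T : finType) (e : rel T) : Prop :=
  simple_graph e /\ 0 < #|T| /\ (forall x y : T, connect e x y)
  /\ nedges e = #|T|.-1.

Definition subcubic (T : finType) (e : rel T) : Prop :=
  forall x : T, deg e x <= 3.

Definition subcubic_tree (T : finType) (e : rel T) : Prop :=
  is_tree e /\ subcubic e.

Definition dissociation_set (T : finType) (e : rel T) (F : {set T}) : bool :=
  [forall x in F, #|nbhd e x :&: F| <= 1].

Definition diss_number (T : finType) (e : rel T) : nat :=
  \max_(F : {set T} | dissociation_set e F) #|F|.

From mathcomp Require Import all_boot zify.
Set Implicit Arguments. Unset Strict Implicit. Unset Printing Implicit Defensive.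

(* A tree is 1-degenerate: if every vertex of a nonempty set S
   had two neighbours in S, S would span at least 2|S| arcs (ordered edges),
   connectivity adds at least 2|~S| arcs leaving S, and 2n > 2(n - 1).
   Now let S be a vertex set that is not a dissociation set.  Applying
   1-degeneracy to the vertices of S that are not pendant in S yields a u with
   at least two neighbours in S, all but at most one of them pendant.  Either
   two of them are pendant, and we keep those pendants and discard u, or u has
   exactly two S-neighbours, one of them a pendant v, and we keep u, v and
   discard the third.  Either way at least two thirds of the removed vertices
   are kept, none of them sees the rest of S, and induction on |S| gives a
   dissociation subset of size at least 2|S|/3.
   Upper bound.  Of the 2(n - 1) arcs, at most |F| lie inside a dissociation
   set F, and at most 6 meet each vertex outside F.
   Both bounds are attained by the stars K_{1,2} = P_3 and K_{1,1} = K_2. *)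

Section ArcCounting.
Variables (T : finType) (e : rel T).

Definition arcs (A B : {set T}) : {set T * T} :=
  [set p | [&& p.1 \in A, p.2 \in B & e p.1 p.2]].

Lemma card_arcs A B : #|arcs A B| = \sum_(x in A) #|nbhd e x :&: B|.
Proof.
under eq_bigr do rewrite -sum1_card.
rewrite pair_big_dep -sum1_card; apply: eq_bigl => -[x y].
by rewrite !inE /= [e x y && _]andbC.
Qed.

Lemma card_arcsT A : #|arcs A setT| = \sum_(x in A) deg e x.
Proof. by rewrite card_arcs; apply: eq_bigr => x _; rewrite setIT. Qed.

Lemma nedges_arcs : nedges e = #|arcs setT setT| %/ 2.
Proof. by rewrite /nedges; congr (_ %/ 2); apply: eq_card => p; rewrite !inE. Qed.

Lemma nedges_sum_deg : nedges e = (\sum_x deg e x) %/ 2.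
Proof.
by rewrite nedges_arcs card_arcsT; congr (_ %/ 2); apply: eq_bigl => x; rewrite inE.
Qed.

Lemma arcs_subT A B : arcs A B \subset arcs setT setT.
Proof. by apply/subsetP => p; rewrite !inE => /and3P[_ _ ->]. Qed.

Lemma leq_diss_number F : dissociation_set e F -> #|F| <= diss_number e.
Proof. exact: (leq_bigmax_cond (F := fun F : {set T} => #|F|)). Qed.

Lemma diss_number_leq m :
  (forall F, dissociation_set e F -> #|F| <= m) -> diss_number e <= m.
Proof. by move/bigmax_leqP. Qed.

Hypothesis e_sym : symmetric e.

Lemma card_arcsC A B : #|arcs A B| = #|arcs B A|.
Proof.
have swapK : involutive (fun p : T * T => (p.2, p.1)) by case.
rewrite -(card_preimset _ (inv_inj swapK)); apply: eq_card => -[x y].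
by rewrite !inE /= e_sym andbCA.
Qed.

Lemma dissociation_setU F G :
  dissociation_set e F -> dissociation_set e G ->
  {in F & G, forall x y, ~~ e x y} -> dissociation_set e (F :|: G).
Proof.
move=> /forallP dF /forallP dG noFG; apply/forallP => x; apply/implyP.
rewrite inE => /orP[xF | xG].
  apply: leq_trans (implyP (dF x) xF); apply/subset_leq_card/subsetP => y.
  rewrite !inE => /andP[exy /orP[yF | yG]]; first by rewrite exy yF.
  by have := noFG x y xF yG; rewrite exy.
apply: leq_trans (implyP (dG x) xG); apply/subset_leq_card/subsetP => y.
rewrite !inE => /andP[exy /orP[yF | yG]]; last by rewrite exy yG.
by have := noFG y x yF xG; rewrite e_sym exy.
Qed.

Lemma subcubic_card_arcs F : subcubic e -> dissociation_set e F ->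
  #|arcs setT setT| <= #|F| + 6 * #|~: F|.
Proof.
move=> e_sub /forallP dF.
have cover : arcs setT setT \subset arcs F F :|: arcs (~: F) setT :|: arcs setT (~: F).
  apply/subsetP => -[x y]; rewrite !inE /= => ->.
  by case: (x \in F); case: (y \in F).
have inside : #|arcs F F| <= #|F|.
  rewrite card_arcs -sum1_card; apply: leq_sum => x xF.
  by have := dF x; rewrite xF.
have outside : #|arcs (~: F) setT| <= 3 * #|~: F|.
  by rewrite card_arcsT -sum1_card big_distrr; apply: leq_sum => x _; exact: e_sub.
apply: (leq_trans (subset_leq_card cover)); apply: (leq_trans (leq_card_setU _ _)).
rewrite card_arcsC; have [setU_le _] := leq_card_setU (arcs F F) (arcs (~: F) setT).
lia.
Qed.

Hypothesis e_conn : forall x y, connect e x y.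

Lemma connected_arcs_out A : A != set0 -> ~: A != set0 -> arcs A (~: A) != set0.
Proof.
move=> /set0Pn[a aA] /set0Pn[x]; rewrite inE => xA.
apply: contraNneq xA => no_arc_out.
have stay u v : e u v -> u \in A -> v \in A.
  move=> euv uA; apply: contraT => vA.
  have : (u, v) \in arcs A (~: A) by rewrite !inE /= uA vA.
  by rewrite no_arc_out inE.
have closedA : closed e (mem A).
  by move=> u v euv /=; apply/idP/idP; apply: stay; rewrite // e_sym.
by rewrite -(closed_connect closedA (e_conn a x)).
Qed.

Lemma connected_card_arcs_out A :
  A != set0 -> 2 * #|~: A| <= #|arcs setT setT :\: arcs A A|.
Proof.
have [n] := ubnP #|~: A|; elim: n A => // n IH A ltAn An0.
have [-> | An] := eqVneq (~: A) set0; first by rewrite cards0.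
have /set0Pn[[y z]] := connected_arcs_out An0 An.
rewrite !inE /= => /and3P[yA zA eyz].
have cardA' : #|~: A| = #|~: (z |: A)|.+1.
  by rewrite (cardsD1 z (~: A)) inE zA setCU setIC setDE.
have A'n0 : z |: A != set0 by apply/set0Pn; exists z; rewrite setU11.
have := IH (z |: A) _ A'n0; rewrite cardA' in ltAn *; move/(_ ltAn).
set out' := _ :\: _.
have sub : (y, z) |: ((z, y) |: out') \subset arcs setT setT :\: arcs A A.
  apply/subsetP => -[u v]; rewrite !inE /= => /or3P[/eqP[-> ->]|/eqP[-> ->]|].
  - by rewrite eyz (negbTE zA) andbF.
  - by rewrite e_sym eyz (negbTE zA).
  - case/andP=> not_inside euv; rewrite euv !andbT.
    by apply: contra not_inside => /andP[uA vA]; rewrite uA vA euv !orbT.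
have yz : y != z by apply: contraNneq zA => <-.
have := subset_leq_card sub.
rewrite cardsU1 cardsU1 !inE /= !xpair_eqE eqxx (negbTE yz) /= [e z y]e_sym eyz yA.
by move=> le_sub le_IH; apply: leq_trans le_sub; rewrite mulnS addnA leq_add2l.
Qed.

End ArcCounting.

(* The 1-degenerate graphs are exactly the forests. *)
Definition one_degenerate (T : finType) (e : rel T) : Prop :=
  forall S : {set T}, S != set0 -> exists2 u, u \in S & #|nbhd e u :&: S| <= 1.

Lemma tree_one_degenerate (T : finType) (e : rel T) : is_tree e -> one_degenerate e.
Proof.
move=> [[e_sym _] [_ [e_conn ned]]] S Sn0.
have [u /andP[uS leaf] | no_leaf] := pickP [pred u in S | #|nbhd e u :&: S| <= 1].
  by exists u.
exfalso.
have inside : 2 * #|S| <= #|arcs e S S|.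
  rewrite card_arcs -sum1_card big_distrr; apply: leq_sum => x xS.
  by have := no_leaf x; rewrite /= xS /=; lia.
have outside := connected_card_arcs_out e_sym e_conn Sn0.
have split_arcs := cardsDS (arcs_subT e S S).
have S_pos : 0 < #|S| by rewrite card_gt0.
have := cardsC S; have := subset_leq_card (arcs_subT e S S).
rewrite nedges_arcs in ned; lia.
Qed.

Section ForestLowerBound.
Variables (T : finType) (e : rel T).
Hypotheses (e_sym : symmetric e) (e_irr : irreflexive e) (e_deg : one_degenerate e).

Lemma dissociation_set2 x y : dissociation_set e [set x; y].
Proof.
have le1 z w : #|nbhd e z :&: [set z; w]| <= 1.
  rewrite -(cards1 w); apply: subset_leq_card; apply/subsetP => v.
  by rewrite !inE => /andP[ezv /orP[/eqP vz | //]]; rewrite vz e_irr in ezv.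
by apply/forallP => z; apply/implyP; rewrite !inE => /orP[]/eqP->; rewrite // setUC.
Qed.

Definition two_thirds_dissociation (S : {set T}) : Prop :=
  exists F : {set T}, [/\ F \subset S, dissociation_set e F & 2 * #|S| <= 3 * #|F|].

Record reduction (S X Z : {set T}) : Prop := Reduction {
  reduction_sub : X \subset S;
  reduction_neq0 : X != set0;
  reduction_kept : Z \subset X;
  reduction_dissociation : dissociation_set e Z;
  reduction_nbhd : {in Z, forall z, nbhd e z :&: S \subset X};
  reduction_card : 2 * #|X| <= 3 * #|Z|
}.

Lemma two_thirds_reduction (S X Z : {set T}) :
  reduction S X Z -> two_thirds_dissociation (S :\: X) -> two_thirds_dissociation S.
Proof.
case=> XS _ ZX dZ ZnS cardXZ [F [FSX dF cardF]].
have FX x : x \in F -> x \notin X by move/(subsetP FSX); rewrite inE => /andP[].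
have FS := subset_trans FSX (subsetDl S X).
exists (F :|: Z); split.
- by rewrite subUset FS (subset_trans ZX XS).
- apply: dissociation_setU => // x z xF zZ; apply: contraNN (FX x xF) => exz.
  by apply: (subsetP (ZnS z zZ)); rewrite !inE e_sym exz (subsetP FS x xF).
- have FZ : F :&: Z = set0.
    by apply/setP => x; rewrite !inE; apply/negbTE/andP => -[/FX/negP xX /(subsetP ZX)].
  have := cardsID X S; rewrite (setIidPr XS) cardsU FZ cards0.
  lia.
Qed.

Lemma pendant_nbhd (S : {set T}) u y :
  u \in S -> e u y -> #|nbhd e y :&: S| <= 1 -> nbhd e y :&: S \subset [set u].
Proof.
move=> uS euy /card_le1_eqP y_pendant; apply/subsetP => x xN; rewrite inE.
by apply/eqP/y_pendant; rewrite // !inE e_sym euy.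
Qed.

Lemma reduction_pendants (S Y : {set T}) u :
  u \in S -> Y \subset nbhd e u :&: S -> {in Y, forall y, #|nbhd e y :&: S| <= 1} ->
  1 < #|Y| -> reduction S (u |: Y) Y.
Proof.
move=> uS /subsetP YN Y_pendant Y2; have YS y : y \in Y -> y \in S.
  by move/YN; rewrite inE => /andP[].
split.
- by rewrite subUset sub1set uS; apply/subsetP.
- by apply/set0Pn; exists u; rewrite setU11.
- exact: subsetUr.
- apply/forallP => y; apply/implyP => yY; apply: leq_trans (Y_pendant y yY).
  by apply/subset_leq_card/setIS/subsetP.
- move=> y yY; apply: subset_trans (pendant_nbhd uS _ (Y_pendant y yY)) _.
    by have := YN y yY; rewrite !inE => /andP[].
  by rewrite sub1set setU11.
- have uY : u \notin Y by apply/negP => /YN; rewrite !inE e_irr.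
  rewrite cardsU1 uY; lia.
Qed.

Lemma reduction_star (S : {set T}) u v :
  u \in S -> v \in nbhd e u :&: S -> #|nbhd e v :&: S| <= 1 ->
  #|nbhd e u :&: S| <= 2 -> reduction S (u |: (nbhd e u :&: S)) [set u; v].
Proof.
move=> uS vN v_pendant u_deg; have uv : u != v.
  by apply: contraTneq vN => <-; rewrite !inE e_irr.
split.
- by rewrite subUset sub1set uS subsetIr.
- by apply/set0Pn; exists u; rewrite setU11.
- by rewrite subUset !sub1set setU11 setU1r.
- exact: dissociation_set2.
- move=> z; rewrite !inE => /orP[]/eqP->; first exact: subsetUr.
  apply: subset_trans (pendant_nbhd uS _ v_pendant) _.
    by move: vN; rewrite !inE => /andP[].
  by rewrite sub1set setU11.
- rewrite cards2 uv; have := cardsU1 u (nbhd e u :&: S); lia.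
Qed.

Lemma exists_reduction (S : {set T}) :
  ~~ dissociation_set e S -> exists X Z, reduction S X Z.
Proof.
case/forallPn => w; rewrite negb_imply => /andP[wS w_branch].
set L := [set y in S | #|nbhd e y :&: S| <= 1].
have [u] : exists2 u, u \in S :\: L & #|nbhd e u :&: (S :\: L)| <= 1.
  by apply: e_deg; apply/set0Pn; exists w; rewrite !inE wS w_branch.
rewrite !inE => /andP[u_branch uS] u_few.
set A := nbhd e u :&: S; set Y := A :&: L.
have A2 : 1 < #|A| by rewrite ltnNge; move: u_branch; rewrite uS.
have AY : #|A| <= #|Y| + 1.
  rewrite -(cardsID L A) leq_add2l; apply: leq_trans u_few; apply: subset_leq_card.
  by apply/subsetP => x; rewrite !inE andbCA.
have Y_pendant : {in Y, forall y, #|nbhd e y :&: S| <= 1}.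
  by move=> y; rewrite !inE => /and3P[].
have [Y2 | Y1] := leqP 2 #|Y|.
  by exists (u |: Y), Y; apply: reduction_pendants => //; apply: subsetIl.
have [v vY] : exists v, v \in Y by apply/card_gt0P; lia.
exists (u |: A), [set u; v]; apply: reduction_star => //.
- by move: vY; rewrite inE => /andP[].
- exact: Y_pendant.
- rewrite -/A; lia.
Qed.

Lemma forest_two_thirds_dissociation (S : {set T}) : two_thirds_dissociation S.
Proof.
have [n] := ubnP #|S|; elim: n S => // n IH S ltSn.
have [dS | /exists_reduction[X [Z red]]] := boolP (dissociation_set e S).
  by exists S; split => //; lia.
apply: (two_thirds_reduction red) (IH _ _).
have [XS Xn0 _ _ _ _] := red; rewrite cardsDS //.
have X_pos : 0 < #|X| by rewrite card_gt0.
have := subset_leq_card XS; lia.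
Qed.

Lemma forest_diss_number_lb : 2 * #|T| <= 3 * diss_number e.
Proof.
have [F [_ dF cardF]] := forest_two_thirds_dissociation setT.
by rewrite cardsT in cardF; apply: leq_trans cardF _; rewrite leq_mul2l leq_diss_number.
Qed.

End ForestLowerBound.

Lemma tree_diss_number_lb (T : finType) (e : rel T) :
  is_tree e -> 2 * #|T| <= 3 * diss_number e.
Proof.
move=> tree; have [[e_sym e_irr] _] := tree.
exact: forest_diss_number_lb e_sym e_irr (tree_one_degenerate tree).
Qed.

Lemma subcubic_tree_diss_number_ub (T : finType) (e : rel T) :
  is_tree e -> subcubic e -> 5 * diss_number e <= 4 * #|T| + 2.
Proof.
move=> [[e_sym _] [_ [_ ned]]] e_sub; rewrite nedges_arcs in ned.
suff : diss_number e <= (4 * #|T| + 2) %/ 5 by rewrite leq_divRL // mulnC.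
apply: diss_number_leq => F dF; rewrite leq_divRL //.
have := subcubic_card_arcs e_sym e_sub dF; have := cardsC F; lia.
Qed.

(* K_{1,k} with centre None. *)
Definition star (k : nat) : rel (option 'I_k) := fun x y => (x == None) != (y == None).
Arguments star : clear implicits.

Lemma star_deg_center k : deg (star k) None = k.
Proof.
rewrite /deg (_ : nbhd _ _ = [set~ None]) ?cardsC1 ?card_option ?card_ord //.
by apply/setP => y; rewrite !inE /star eqxx.
Qed.

Lemma star_deg_leaf k i : deg (star k) (Some i) = 1.
Proof.
rewrite /deg (_ : nbhd _ _ = [set None]) ?cards1 //.
by apply/setP => y; rewrite !inE /star /=; case: y.
Qed.

Lemma star_sym k : symmetric (star k).
Proof. by move=> x y; rewrite /star eq_sym. Qed.

Lemma star_irr k : irreflexive (star k).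
Proof. by move=> x; rewrite /star eqxx. Qed.

Lemma star_tree k : is_tree (star k).
Proof.
have to_center x : connect (star k) x None.
  by case: x => [i|]; [apply: connect1 | apply: connect0].
split; first exact: conj (@star_sym k) (@star_irr k).
split; first by rewrite card_option.
split.
  move=> x y; apply: connect_trans (to_center x) _.
  by rewrite (sym_connect_sym (@star_sym k)); apply: to_center.
rewrite nedges_sum_deg (bigD1 None) //= star_deg_center card_option card_ord.
rewrite (eq_bigr (fun _ => 1)); last by case=> [i|] //; rewrite star_deg_leaf.
by rewrite sum1_card cardC1 card_option card_ord addnn -mul2n mulKn.
Qed.

Lemma star_subcubic_tree k : k <= 3 -> subcubic_tree (star k).
Proof.
move=> k3; split; first exact: star_tree.
by case=> [i|]; rewrite ?star_deg_leaf ?star_deg_center.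
Qed.

Lemma star_diss_number_ge2 k : 0 < k -> 2 <= diss_number (star k).
Proof.
move=> k_pos.
have := leq_diss_number (dissociation_set2 (@star_irr k) None (Some (Ordinal k_pos))).
by rewrite cards2 eq_sym.
Qed.

Lemma star1_diss_number : diss_number (star 1) = 2.
Proof.
apply/eqP; rewrite eqn_leq star_diss_number_ge2 // andbT.
apply: diss_number_leq => F _; apply: leq_trans (max_card _) _.
by rewrite card_option card_ord.
Qed.

Lemma star2_diss_number : diss_number (star 2) = 2.
Proof.
apply/eqP; rewrite eqn_leq star_diss_number_ge2 // andbT.
apply: diss_number_leq => F /forallP dF; rewrite leqNgt; apply/negP => F3.
have FT : F = setT by apply/eqP; rewrite eqEcard subsetT cardsT card_option card_ord.
by have := dF None; rewrite FT inE setIT -/(deg _ _) star_deg_center.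
Qed.

Theorem theorem2p4 :
  (forall (T : finType) (e : rel T), subcubic_tree e ->
     2 * #|T| <= 3 * diss_number e /\ 5 * diss_number e <= 4 * #|T| + 2)
  /\ (exists (T : finType) (e : rel T),
        subcubic_tree e /\ 3 * diss_number e = 2 * #|T|)
  /\ (exists (T : finType) (e : rel T),
        subcubic_tree e /\ 5 * diss_number e = 4 * #|T| + 2).
Proof.
split.
  move=> T e [tree e_sub].
  by split; [exact: tree_diss_number_lb | exact: subcubic_tree_diss_number_ub].
split.
  exists _, (star 2); split; first exact: star_subcubic_tree.
  by rewrite star2_diss_number card_option card_ord.
exists _, (star 1); split; first exact: star_subcubic_tree.
by rewrite star1_diss_number card_option card_ord.
Qed.
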